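(* Let $(G,w)$ be a weighted trigraph and let $R_1,R_2\subseteq V(G)$ be disjoint. Set $\alpha_{R_1}=\alpha(\mathrm{Red}[G,w;R_1])+\mathrm{Ext}[G,w;R_1]$ and $\alpha_{R_1\cup R_2}=\alpha(\mathrm{Red}[G,w;R_1\cup R_2])+\mathrm{Ext}[G,w;R_1\cup R_2]$. Then $\alpha_{R_1}\le\alpha_{R_1\cup R_2}\le\alpha_{R_1}+\sum_{u\in R_2}w(u)$.
   Context: A trigraph $G$ consists of a finite vertex set $V(G)$ and an adjacency function $\theta_G:\binom{V(G)}{2}\to\{-1,0,1\}$; for distinct $u,v$ write $uv$ for $\{u,v\}$; $uv$ is semi-adjacent if $\theta_G(uv)=0$, and $u,v$ are anti-adjacent if $\theta_G(uv)\le 0$. A stable set is a set of pairwise anti-adjacent vertices. For $X\subseteq V(G)$, $G[X]$ is the trigraph on $X$ with the restricted adjacency function. $\mathbb N$ denotes the non-negative integers. For a trigraph $G$ let $D(G)=V(G)\cup\{(u,v):u,v\in V(G),u\neq v\}\cup\binom{V(G)}{2}$. A weight function for $G$ is a map $w:D(G)\to\mathbb N$ such that for all distinct $u,v$: if $uv$ is not semi-adjacent then $w(u,v)=w(v,u)=w(uv)=0$, and $w(u,v)\le w(uv)$. A weighted trigraph is a pair $(G,w)$ with $w$ a weight function for $G$. The weight of $S\subseteq V(G)$ is $\llbracket S\rrbracket_{(G,w)}=\sum_{u\in S}w(u)+\sum_{u\in S}\sum_{v\in V(G)\setminus S}w(u,v)+\sum_{uv\in\binom{V(G)\setminus S}{2}}w(uv)$,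 and $\alpha(G,w)=\max\{\llbracket S\rrbracket_{(G,w)}: S \text{ a stable set of } G\}$. For $R\subseteq V(G)$, the reduction $\mathrm{Red}[G,w;R]$ is the weighted trigraph $(G[R],w')$ where $w'(u)=\max\{w(u)-\sum_{v\in V(G)\setminus R}(w(uv)-w(u,v)),0\}$ for $u\in R$, and $w'(u,v)=w(u,v)$, $w'(uv)=w(uv)$ for distinct $u,v\in R$. The exterior weight is $\mathrm{Ext}[G,w;R]=\sum_{uv\in\binom{V(G)\setminus R}{2}}w(uv)+\sum_{u\in R}\sum_{v\in V(G)\setminus R}w(uv)$. *)

From HB Require Import structures.
From mathcomp Require Import all_boot all_order all_algebra.
Set Implicit Arguments. Unset Strict Implicit. Unset Printing Implicit Defensive.
Import Order.TTheory GRing.Theory Num.Theory.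

(* A trigraph G has vertex set V (a finType); its adjacency function
   theta is defined on 2-element subsets {u,v} (as {set V}); values on
   other sets are irrelevant.  Induced subtrigraphs G[X] are represented by
   a vertex subset X together with the restriction of theta. *)

Definition is_trigraph (V : finType) (theta : {set V} -> int) : Prop :=
  forall u v : V, u != v ->
    (theta [set u; v] == (-1)%R) || (theta [set u; v] == 0%R) || (theta [set u; v] == 1%R).

(* A weight function: vertex weights wv, ordered-pair weights wd,
   unordered-pair weights wp (indexed by 2-element sets). *)
Definition is_weight (V : finType) (theta : {set V} -> int)
  (wv : V -> nat) (wd : V -> V -> nat) (wp : {set V} -> nat) : Prop :=
  forall u v : V, u != v ->
    (theta [set u; v] != 0%R ->
       wd u v = 0%N /\ wd v u = 0%N /\ wp [set u; v] = 0%N)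
    /\ (wd u v <= wp [set u; v])%N.

Definition pairs_in (V : finType) (Y : {set V}) : {set {set V}} :=
  [set e : {set V} | (e \subset Y) && (#|e| == 2)].

Definition wset (V : finType) (X : {set V})
  (wv : V -> nat) (wd : V -> V -> nat) (wp : {set V} -> nat) (S : {set V}) : nat :=
  (\sum_(u in S) wv u + \sum_(u in S) \sum_(v in X :\: S) wd u v
   + \sum_(e in pairs_in (X :\: S)) wp e)%N.

Definition stable (V : finType) (theta : {set V} -> int) (S : {set V}) : bool :=
  [forall u in S, forall v in S, (u != v) ==> (theta [set u; v] <= 0)%R].

Definition alpha (V : finType) (theta : {set V} -> int) (X : {set V})
  (wv : V -> nat) (wd : V -> V -> nat) (wp : {set V} -> nat) : nat :=
  \max_(S : {set V} | (S \subset X) && stable theta S) wset X wv wd wp S.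

(* vertex weights of Red[G,w;R]; truncated nat subtraction = max(.,0) *)
Definition red_wv (V : finType) (R : {set V})
  (wv : V -> nat) (wd : V -> V -> nat) (wp : {set V} -> nat) : V -> nat :=
  fun u => (wv u - \sum_(v in ~: R) (wp [set u; v] - wd u v))%N.

Definition ext (V : finType) (R : {set V}) (wp : {set V} -> nat) : nat :=
  (\sum_(e in pairs_in (~: R)) wp e
   + \sum_(u in R) \sum_(v in ~: R) wp [set u; v])%N.

Definition alpha_R (V : finType) (theta : {set V} -> int)
  (wv : V -> nat) (wd : V -> V -> nat) (wp : {set V} -> nat) (R : {set V}) : nat :=
  (alpha theta R (red_wv R wv wd wp) wd wp + ext R wp)%N.

(* Write c_B(u) = sum_{v in B} (w(uv) - w(u,v)), so that the reduction to R lowers w(u) to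
   (w(u) - c_{~R}(u))_+.  Unfolding the definitions, alpha(Red[G,w;R]) + Ext[G,w;R] is the
   maximum over stable S included in R of the weight of S in the whole of (G,w) plus the
   excess sum_{u in S} (c_{~R}(u) - w(u))_+, and c_{~R}(u) only grows when R shrinks.
   Deleting a subset D from S changes the weight of S by at least
   sum_{u in D} (c_{~S}(u) - w(u)), and c_{~S} >= c_{~R}.  For the lower bound, delete from an
   optimal S in R1 the vertices of positive excess; for the upper bound, delete from an
   optimal S in R1 u R2 its vertices outside R1, which lie in R2. *)

From HB Require Import structures.
From mathcomp Require Import all_boot all_order all_algebra.
From mathcomp Require Import zify.
Set Implicit Arguments. Unset Strict Implicit. Unset Printing Implicit Defensive.

Lemma sum_setU (T : finType) (F : T -> nat) (A B : {set T}) : [disjoint A & B] ->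
  \sum_(i in A :|: B) F i = \sum_(i in A) F i + \sum_(i in B) F i.
Proof. by move=> AB; rewrite -bigU //; apply: eq_bigl => i; rewrite !inE. Qed.

Lemma sum_setD_split (T : finType) (F : T -> nat) (A B : {set T}) : A \subset B ->
  \sum_(i in B) F i = \sum_(i in A) F i + \sum_(i in B :\: A) F i.
Proof. by move=> AB; rewrite (big_setID A) /= (setIidPr AB). Qed.

Lemma leq_sum_subset (T : finType) (F : T -> nat) (A B : {set T}) :
  A \subset B -> \sum_(i in A) F i <= \sum_(i in B) F i.
Proof. by move=> AB; rewrite (sum_setD_split F AB) leq_addr. Qed.

Section WeightAlgebra.

Variables (V : finType) (theta : {set V} -> int).
Variables (wv : V -> nat) (wd : V -> V -> nat) (wp : {set V} -> nat).

Definition pair_weight (A : {set V}) : nat := \sum_(e in pairs_in A) wp e.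

Definition cross_weight (A B : {set V}) : nat :=
  \sum_(a in A) \sum_(b in B) wp [set a; b].

Definition dart_weight (A B : {set V}) : nat := \sum_(a in A) \sum_(b in B) wd a b.

Definition boundary_weight (B : {set V}) (u : V) : nat :=
  \sum_(v in B) (wp [set u; v] - wd u v).

Definition total_weight (S : {set V}) : nat := wset [set: V] wv wd wp S.

Definition red_excess (R : {set V}) (u : V) : nat := boundary_weight (~: R) u - wv u.

Lemma wsetE (X S : {set V}) (rw : V -> nat) :
  wset X rw wd wp S = \sum_(u in S) rw u + dart_weight S (X :\: S) + pair_weight (X :\: S).
Proof. by []. Qed.

Lemma extE (R : {set V}) : ext R wp = pair_weight (~: R) + cross_weight R (~: R).
Proof. by []. Qed.

Lemma cross_weightUl (A B C : {set V}) : [disjoint A & B] ->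
  cross_weight (A :|: B) C = cross_weight A C + cross_weight B C.
Proof. exact: sum_setU. Qed.

Lemma cross_weightC (A B : {set V}) : cross_weight A B = cross_weight B A.
Proof.
by rewrite /cross_weight exchange_big; apply: eq_bigr => a _; apply: eq_bigr => b _; rewrite setUC.
Qed.

Lemma dart_weightUr (A B C : {set V}) : [disjoint A & B] ->
  dart_weight C (A :|: B) = dart_weight C A + dart_weight C B.
Proof. by move=> AB; rewrite -big_split; apply: eq_bigr => c _; rewrite sum_setU. Qed.

Lemma pairs_in_setU (A B : {set V}) : [disjoint A & B] ->
  pairs_in (A :|: B) =
  pairs_in A :|: pairs_in B :|: [set [set p.1; p.2] | p in setX A B].
Proof.
move=> AB; have neqAB a b : a \in A -> b \in B -> a != b.
  by move=> aA bB; apply: contraTneq aA => ->; rewrite (disjointFl AB bB).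
apply/setP => e; rewrite !inE; apply/idP/idP.
- case/andP => sub /cards2P [x [y [xy exy]]]; subst e.
  have := subsetP sub x (set21 x y); have := subsetP sub y (set22 x y).
  rewrite !inE cards2 xy andbT => /orP [yA|yB] /orP [xA|xB].
  + by rewrite !subUset !sub1set xA yA.
  + by apply/orP; right; apply/imsetP; exists (y, x); rewrite ?inE ?yA ?xB // setUC.
  + by apply/orP; right; apply/imsetP; exists (x, y); rewrite ?inE ?xA ?yB.
  + by rewrite !subUset !sub1set xB yB orbT.
- case/orP => [/orP [] /andP [sub ->] | /imsetP [[a b]]].
  + by rewrite andbT (subset_trans sub (subsetUl _ _)).
  + by rewrite andbT (subset_trans sub (subsetUr _ _)).
  rewrite inE /= => /andP [aA bB] ->.
  by rewrite subUset !sub1set !inE aA bB orbT cards2 (neqAB a b).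
Qed.

Lemma pair_weight_setU (A B : {set V}) : [disjoint A & B] ->
  pair_weight (A :|: B) = pair_weight A + pair_weight B + cross_weight A B.
Proof.
move=> AB; have notAB x : x \in A -> x \in B -> False.
  by move=> xA; rewrite (disjointFr AB xA).
have pairsAB : [disjoint pairs_in A & pairs_in B].
  rewrite -setI_eq0; apply/eqP/setP => e; rewrite !inE.
  apply/negP => /andP [/andP [sA /cards2P [x [y [_ exy]]]] /andP [sB _]]; subst e.
  by apply: (notAB x); [apply: (subsetP sA) | apply: (subsetP sB)]; rewrite set21.
have pairsX : [disjoint pairs_in A :|: pairs_in B & [set [set p.1; p.2] | p in setX A B]].
  rewrite -setI_eq0; apply/eqP/setP => e; rewrite !inE; apply/negP.
  case/andP => /orP [] /andP [s _] /imsetP [[a b]]; rewrite inE /= => /andP [aA bB] ee.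
  + by apply: (notAB b _ bB); apply: (subsetP s); rewrite ee set22.
  + by apply: (notAB a aA); apply: (subsetP s); rewrite ee set21.
rewrite /pair_weight pairs_in_setU // !sum_setU // big_imset /=.
  by rewrite /cross_weight pair_big /=; congr (_ + _); apply: eq_bigl => -[a b]; rewrite inE.
move=> [a b] [a' b']; rewrite !inE /= => /andP [aA bB] /andP [aA' bB'] E.
have : a \in [set a'; b'] by rewrite -E set21.
rewrite !inE => /orP [/eqP ea | /eqP ea]; last by case: (notAB a aA); rewrite ea.
have : b \in [set a'; b'] by rewrite -E set22.
rewrite !inE => /orP [/eqP eb | /eqP eb]; first by case: (notAB b _ bB); rewrite eb.
by rewrite ea eb.
Qed.

Lemma boundary_weightS (B B' : {set V}) u :
  B \subset B' -> boundary_weight B u <= boundary_weight B' u.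
Proof. exact: leq_sum_subset. Qed.

Hypothesis w_weight : is_weight theta wv wd wp.

Lemma boundary_weight_add_darts (B : {set V}) u : u \notin B ->
  boundary_weight B u + \sum_(v in B) wd u v = \sum_(v in B) wp [set u; v].
Proof.
move=> uB; rewrite -big_split; apply: eq_bigr => v vB /=.
have uv : u != v by apply: contraNneq uB => ->.
by rewrite subnK //; case: (w_weight uv).
Qed.

Lemma cross_weight_darts (A B : {set V}) : [disjoint A & B] ->
  cross_weight A B = \sum_(u in A) boundary_weight B u + dart_weight A B.
Proof.
move=> AB; rewrite /dart_weight -big_split; apply: eq_bigr => u uA /=.
by rewrite boundary_weight_add_darts // (disjointFr AB uA).
Qed.

Lemma total_weight_setD (S D : {set V}) : D \subset S ->
  total_weight S + \sum_(u in D) boundary_weight (~: S) u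
  <= total_weight (S :\: D) + \sum_(u in D) wv u.
Proof.
move=> DS.
have disjCS_D : [disjoint ~: S & D].
  by rewrite disjoint_sym disjoints_subset setCK.
have dartS : dart_weight S (~: S) = dart_weight D (~: S) + dart_weight (S :\: D) (~: S).
  exact: sum_setD_split.
rewrite /total_weight !wsetE !setTD setCD pair_weight_setU // dart_weightUr //.
rewrite (sum_setD_split wv DS) dartS cross_weightC cross_weight_darts 1?disjoint_sym //.
lia.
Qed.

Lemma alpha_R_value (R S : {set V}) : S \subset R ->
  wset R (red_wv R wv wd wp) wd wp S + ext R wp
  = total_weight S + \sum_(u in S) red_excess R u.
Proof.
move=> SR.
have R_split : R = S :|: R :\: S by rewrite -{1}(setID R S) (setIidPr SR).
have disjS_RS : [disjoint S & R :\: S].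
  by rewrite disjoints_subset; apply/subsetP => x; rewrite !inE => ->.
have disjRS_CR : [disjoint R :\: S & ~: R].
  by rewrite disjoints_subset; apply/subsetP => x; rewrite !inE => /andP [_ ->].
have CS_split : ~: S = R :\: S :|: ~: R.
  apply/setP => x; rewrite !inE; case xS: (x \in S); last by rewrite orbN.
  by rewrite (subsetP SR x xS).
have crossR : cross_weight R (~: R) = cross_weight S (~: R) + cross_weight (R :\: S) (~: R).
  by rewrite {1}R_split cross_weightUl.
have vertexwise : \sum_(u in S) red_wv R wv wd wp u + \sum_(u in S) boundary_weight (~: R) u
    = \sum_(u in S) wv u + \sum_(u in S) red_excess R u.
  by rewrite -!big_split; apply: eq_bigr => u _ /=; rewrite /red_excess /red_wv /boundary_weight; lia.
rewrite /total_weight !wsetE extE setTD CS_split crossR cross_weight_darts; last first.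
  by rewrite disjoints_subset setCK.
rewrite pair_weight_setU // dart_weightUr ?disjRS_CR //.
lia.
Qed.

End WeightAlgebra.

Lemma stable_subset (V : finType) (theta : {set V} -> int) (S T : {set V}) :
  T \subset S -> stable theta S -> stable theta T.
Proof.
move=> TS /forall_inP stS; apply/forall_inP => u uT; apply/forall_inP => v vT.
by have /forall_inP := stS u (subsetP TS u uT); apply; apply: (subsetP TS).
Qed.

Lemma leq_alpha (V : finType) (theta : {set V} -> int) (X S : {set V})
  (rw : V -> nat) (wd : V -> V -> nat) (wp : {set V} -> nat) :
  S \subset X -> stable theta S -> wset X rw wd wp S <= alpha theta X rw wd wp.
Proof. by move=> SX stS; apply: leq_bigmax_cond; rewrite SX stS. Qed.

Lemma alpha_attained (V : finType) (theta : {set V} -> int) (X : {set V})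
  (rw : V -> nat) (wd : V -> V -> nat) (wp : {set V} -> nat) :
  exists2 S : {set V}, (S \subset X) && stable theta S
                     & alpha theta X rw wd wp = wset X rw wd wp S.
Proof.
have nonempty : 0 < #|[pred S : {set V} | (S \subset X) && stable theta S]|.
  apply/card_gt0P; exists set0; rewrite inE sub0set.
  by apply/forall_inP => u; rewrite inE.
have [S stS eqS] := eq_bigmax_cond (wset X rw wd wp) nonempty.
by exists S; [move: stS; rewrite inE | rewrite -eqS].
Qed.

Section AlphaR.

Variables (V : finType) (theta : {set V} -> int).
Variables (wv : V -> nat) (wd : V -> V -> nat) (wp : {set V} -> nat).
Hypothesis w_weight : is_weight theta wv wd wp.

Local Notation alpha_R := (alpha_R theta wv wd wp).
Local Notation W := (total_weight wv wd wp).
Local Notation excess := (red_excess wv wd wp).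
Local Notation boundary := (boundary_weight wd wp).

Lemma leq_alpha_R (R S : {set V}) : S \subset R -> stable theta S ->
  W S + \sum_(u in S) excess R u <= alpha_R R.
Proof.
by move=> SR stS; rewrite -(alpha_R_value w_weight SR) leq_add2r leq_alpha.
Qed.

Lemma alpha_R_attained (R : {set V}) :
  exists2 S : {set V}, (S \subset R) && stable theta S
                     & alpha_R R = W S + \sum_(u in S) excess R u.
Proof.
have [S /andP [SR stS] eqS] := alpha_attained theta R (red_wv R wv wd wp) wd wp.
by exists S; rewrite ?SR // /alpha_R eqS (alpha_R_value w_weight SR).
Qed.

Lemma alpha_R_subset (R R' : {set V}) : R \subset R' -> alpha_R R <= alpha_R R'.
Proof.
move=> RR'; have [S /andP [SR stS] ->] := alpha_R_attained R.
pose D := [set u in S | wv u < boundary (~: R) u].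
have DS : D \subset S by apply/subsetP => u; rewrite inE => /andP [].
have excess_off_D : \sum_(u in S :\: D) excess R u = 0.
  apply: big1 => u; rewrite !inE => /andP [uD uS]; apply/eqP; rewrite subn_eq0.
  by rewrite uS -leqNgt in uD.
have excess_on_D : \sum_(u in D) excess R u + \sum_(u in D) wv u
                   <= \sum_(u in D) boundary (~: S) u.
  rewrite -big_split; apply: leq_sum => u; rewrite inE => /andP [_ lt_wv].
  by rewrite /= subnK ?(ltnW lt_wv) // boundary_weightS // setCS.
have := total_weight_setD w_weight DS.
have := leq_alpha_R (subset_trans (subsetDl S D) (subset_trans SR RR'))
                    (stable_subset (subsetDl S D) stS).
rewrite (sum_setD_split _ DS) excess_off_D.
lia.
Qed.

Lemma alpha_R_setU (R1 R2 : {set V}) :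
  alpha_R (R1 :|: R2) <= alpha_R R1 + \sum_(u in R2) wv u.
Proof.
have [S /andP [SR stS] ->] := alpha_R_attained (R1 :|: R2).
pose D := S :\: R1.
have DS : D \subset S := subsetDl S R1.
have DR2 : D \subset R2.
  by apply/subsetP => u; rewrite !inE => /andP [uR1 /(subsetP SR)]; rewrite inE (negbTE uR1).
have TR1 : S :\: D \subset R1.
  by apply/subsetP => u; rewrite !inE; case: (u \in R1); case: (u \in S).
have excess_T : \sum_(u in S :\: D) excess (R1 :|: R2) u <= \sum_(u in S :\: D) excess R1 u.
  by apply: leq_sum => u _; rewrite leq_sub2r // boundary_weightS // setCS subsetUl.
have excess_D : \sum_(u in D) excess (R1 :|: R2) u <= \sum_(u in D) boundary (~: S) u.
  apply: leq_sum => u _; apply: leq_trans (leq_subr _ _) _.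
  by rewrite boundary_weightS // setCS.
have := total_weight_setD w_weight DS.
have := leq_alpha_R TR1 (stable_subset (subsetDl S D) stS).
have := leq_sum_subset wv DR2.
rewrite (sum_setD_split _ DS).
lia.
Qed.

End AlphaR.

Theorem proposition3p8 (V : finType) (theta : {set V} -> int)
  (wv : V -> nat) (wd : V -> V -> nat) (wp : {set V} -> nat)
  (R1 R2 : {set V}) :
  is_trigraph theta -> is_weight theta wv wd wp -> [disjoint R1 & R2] ->
  (alpha_R theta wv wd wp R1 <= alpha_R theta wv wd wp (R1 :|: R2)
   <= alpha_R theta wv wd wp R1 + \sum_(u in R2) wv u)%N.
Proof.
move=> _ w_weight _.
by rewrite alpha_R_subset ?subsetUl // alpha_R_setU.
Qed.
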